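(* Let $M$ be an $n\times d$ matrix (a database). For every nonempty subset of columns $J\subseteq[d]$, every family of thresholds $\{t_j\}_{j\in J}\subseteq(0,1]$, and every $c\in(0,1)$, \[ Q_J\Big(c\prod_{j\in J} t_j\Big)\;\le\;\sum_{j\in J} Q_j(t_j)\;+\;c . \]
   Context: $M$ has $n$ rows (users) and $d$ columns (features); $M_{ij}$ is the value of feature $j$ for user $i$. For a column $j$, $V_j=\{M_{ij}: i\in[n]\}$, and for $J\subseteq[d]$, $V_J=\prod_{j\in J}V_j$. The empirical joint distribution of the columns $J$ is $p_J(v)=\frac{1}{n}\,|\{i\in[n]: M_{ij}=v_j \text{ for all } j\in J\}|$ for $v\in V_J$. The exposure of columns $J$ at threshold $t$ is \[ Q_J(t)=\sum_{v\in V_J} p_J(v)\,\mathbf 1[p_J(v)<t]. \] For a single column $j$, $Q_j:=Q_{\{j\}}$. *)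

From HB Require Import structures.
From mathcomp Require Import all_boot all_order all_algebra.
Set Implicit Arguments. Unset Strict Implicit. Unset Printing Implicit Defensive.
Import Order.TTheory GRing.Theory Num.Theory.
Local Open Scope ring_scope.

Section Exposure.
Variables (R : realFieldType) (T : eqType) (n d : nat) (M : 'M[T]_(n, d)).

Definition Vcol (j : 'I_d) : seq T := undup [seq M i j | i <- enum 'I_n].

(* V_J = prod_{j in J} V_j ; an element v is the list (v_j)_{j in J}, listed
   along the increasing enumeration of J. *)
Definition VJ (J : {set 'I_d}) : seq (seq T) :=
  foldr (fun j acc => [seq x :: s | x <- Vcol j, s <- acc]) [:: [::]] (enum J).

Definition rowJ (J : {set 'I_d}) (i : 'I_n) : seq T := [seq M i j | j <- enum J].

Definition pJ (J : {set 'I_d}) (v : seq T) : R :=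
  (#|[set i : 'I_n | rowJ J i == v]|)%:R / n%:R.

Definition QJ (J : {set 'I_d}) (t : R) : R :=
  \sum_(v <- VJ J) pJ J v * ((pJ J v < t)%R : bool)%:R.

Definition Qj (j : 'I_d) (t : R) : R := QJ [set j] t.

End Exposure.

From Pilot Require Import Defs.
From HB Require Import structures.
From mathcomp Require Import all_boot all_order all_algebra.
Set Implicit Arguments. Unset Strict Implicit. Unset Printing Implicit Defensive.
Import Order.TTheory GRing.Theory Num.Theory.
Local Open Scope ring_scope.

(* Let tau = c * prod_j t_j.  A row i counted in Q_J(tau) either has a value
   M i j with p_j(M i j) < t_j for some j in J, and is then counted in
   Q_j(t_j), or all its values are t_j-frequent in their columns.  Column j has
   at most 1/t_j frequent values, so rows of the second kind realise at most
   1/prod_j t_j different joint values v, each carried by fewer than tau * n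
   rows; together they make up at most a fraction c of the database. *)

Definition cart_prod (T : eqType) (I : Type) (S : I -> seq T) (l : seq I) :
    seq (seq T) :=
  foldr (fun j acc => [seq x :: s | x <- S j, s <- acc]) [:: [::]] l.

Lemma cart_prod_uniq (T : eqType) (I : Type) (S : I -> seq T) (l : seq I) :
  (forall j, uniq (S j)) -> uniq (cart_prod S l).
Proof.
move=> S_uniq; elim: l => [|j l IHl] //=.
by apply: allpairs_uniq => // -[x s] [y r] _ _ /= [-> ->].
Qed.

Lemma map_mem_cart_prod (T : eqType) (I : eqType) (S : I -> seq T) (l : seq I)
    (f : I -> T) :
  (forall j, j \in l -> f j \in S j) -> [seq f j | j <- l] \in cart_prod S l.
Proof.
elim: l => [|j l IHl] fS //=.
apply: allpairs_f; first by apply: fS; rewrite mem_head.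
by apply: IHl => k lk; apply: fS; rewrite inE lk orbT.
Qed.

Lemma size_cart_prod (T : eqType) (I : Type) (S : I -> seq T) (l : seq I) :
  size (cart_prod S l) = (\prod_(j <- l) size (S j))%N.
Proof.
elim: l => [|j l IHl]; first by rewrite big_nil.
by rewrite big_cons /= size_allpairs IHl.
Qed.

Lemma sum_card_fiber (R : numDomainType) (I : finType) (K : eqType)
    (g : I -> K) (s : seq K) (F : K -> R) :
  uniq s ->
  \sum_(v <- s) #|[set i | g i == v]|%:R * F v
    = \sum_i (g i \in s)%:R * F (g i).
Proof.
move=> s_uniq.
have card_fiber v : #|[set i | g i == v]|%:R = \sum_i (g i == v)%:R :> R.
  rewrite -sum1_card natr_sum big_mkcond; apply: eq_bigr => i _.
  by rewrite inE; case: (g i == v).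
under eq_bigr do rewrite card_fiber mulr_suml.
rewrite exchange_big /=; apply: eq_bigr => i _.
have [gi_s | gi_s] := boolP (g i \in s).
  rewrite (bigD1_seq (g i)) //= eqxx big1 ?addr0 // => v.
  by rewrite eq_sym => /negbTE ->; rewrite mul0r.
rewrite mul0r big_seq big1 // => v v_s.
by rewrite eq_sym (negbTE (memPn gi_s v v_s)) mul0r.
Qed.

Lemma count_ge_mulr_le_sum (R : numDomainType) (T : Type) (s : seq T)
    (f : T -> R) (t : R) :
  0 <= t -> (forall x, 0 <= f x) ->
  (count (fun x => t <= f x) s)%:R * t <= \sum_(x <- s) f x.
Proof.
move=> t_ge0 f_ge0; elim: s => [|x s IHs]; first by rewrite big_nil mul0r.
rewrite big_cons /= natrD mulrDl lerD //.
by case: (boolP (t <= f x)); rewrite ?mul1r ?mul0r.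
Qed.

Section Exposure.
Variables (R : realFieldType) (T : eqType) (n d : nat) (M : 'M[T]_(n, d)).

Implicit Types (J : {set 'I_d}) (tau : R).

Local Notation pJ := (pJ R M).

Lemma mem_Vcol i j : M i j \in Vcol M j.
Proof. by rewrite mem_undup; apply: map_f; rewrite mem_enum. Qed.

Lemma pJ_ge0 J v : 0 <= pJ J v.
Proof. by rewrite divr_ge0. Qed.

Lemma pJ_empty J v : n = 0%N -> pJ J v = 0.
Proof.
by move=> n0; rewrite /Defs.pJ (_ : n%:R = 0) ?invr0 ?mulr0 // n0.
Qed.

Lemma pJ_mulrn J v : pJ J v * n%:R = #|[set i | rowJ M J i == v]|%:R.
Proof.
have [n0|n_gt0] := posnP n; last by rewrite mulfVK // pnatr_eq0 -lt0n.
have -> : #|[set i | rowJ M J i == v]| = 0%N.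
  by apply/eqP; rewrite -leqn0 -n0 -[leqRHS]card_ord max_card.
by rewrite (_ : n%:R = 0) ?mulr0 // n0.
Qed.

Lemma sum_rowJ_in J (P : seq (seq T)) (F : seq T -> R) :
  uniq P ->
  \sum_i (rowJ M J i \in P)%:R * F (rowJ M J i)
    = n%:R * \sum_(v <- P) pJ J v * F v.
Proof.
move=> P_uniq; rewrite -sum_card_fiber // mulr_sumr.
by apply: eq_bigr => v _; rewrite -pJ_mulrn mulrCA mulrA.
Qed.

Lemma QJ_rows J tau :
  QJ M J tau = n%:R^-1 * \sum_i (pJ J (rowJ M J i) < tau)%R%:R.
Proof.
have VJ_uniq : uniq (VJ M J).
  by apply: cart_prod_uniq => j; apply: undup_uniq.
have mem_VJ i : rowJ M J i \in VJ M J.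
  by apply: (map_mem_cart_prod (f := M i)) => j _; apply: mem_Vcol.
have [n0|n_gt0] := posnP n.
  rewrite (_ : n%:R = 0) ?invr0 ?mul0r ?n0 // /QJ big1 // => v _.
  by rewrite pJ_empty ?mul0r.
apply: (@mulfI _ n%:R); first by rewrite pnatr_eq0 -lt0n.
rewrite mulVKf ?pnatr_eq0 -?lt0n // /QJ -sum_rowJ_in //.
by apply: eq_bigr => i _; rewrite mem_VJ mul1r.
Qed.

Lemma rowJ_set1 j i : rowJ M [set j] i = [:: M i j].
Proof. by rewrite /rowJ enum_set1. Qed.

Lemma Qj_rows j t :
  Qj M j t = n%:R^-1 * \sum_i (pJ [set j] [:: M i j] < t)%R%:R.
Proof. by rewrite /Qj QJ_rows; under eq_bigr do rewrite rowJ_set1. Qed.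

Lemma pJ_set1_mulrn j x :
  pJ [set j] [:: x] * n%:R = #|[set i | M i j == x]|%:R.
Proof.
rewrite pJ_mulrn; congr (_%:R); apply: eq_card => i.
by rewrite !inE rowJ_set1 eqseq_cons andbT.
Qed.

Lemma sum_pJ_set1_le1 j : \sum_(x <- Vcol M j) pJ [set j] [:: x] <= 1.
Proof.
have [n0|n_gt0] := posnP n.
  by rewrite big1 // => x _; rewrite pJ_empty.
rewrite -(ler_pM2r (_ : 0 < n%:R)) ?ltr0n // mul1r mulr_suml.
under eq_bigr do rewrite pJ_set1_mulrn -[_%:R]mulr1.
rewrite sum_card_fiber ?undup_uniq //.
under eq_bigr do rewrite mem_Vcol mulr1.
by rewrite sumr_const card_ord.
Qed.

Definition frequent j (t : R) : seq T :=
  [seq x <- Vcol M j | t <= pJ [set j] [:: x]].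

Definition frequent_tuples J (t : 'I_d -> R) : seq (seq T) :=
  cart_prod (fun j => frequent j (t j)) (enum J).

Lemma size_frequent_mulr_le1 j t : 0 <= t -> (size (frequent j t))%:R * t <= 1.
Proof.
move=> t_ge0; rewrite size_filter; apply: le_trans (sum_pJ_set1_le1 j).
by apply: count_ge_mulr_le_sum => // x; apply: pJ_ge0.
Qed.

Lemma size_frequent_tuples_mulr_le1 J (t : 'I_d -> R) :
  (forall j, j \in J -> 0 <= t j) ->
  (size (frequent_tuples J t))%:R * \prod_(j in J) t j <= 1.
Proof.
move=> t_ge0; rewrite size_cart_prod natr_prod big_enum -big_split /=.
apply: prodr_ile1 => j Jj.
by rewrite mulr_ge0 ?t_ge0 //= size_frequent_mulr_le1 ?t_ge0.
Qed.

Lemma rare_row_cover J (t : 'I_d -> R) tau i :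
  (pJ J (rowJ M J i) < tau)%R%:R
    <= \sum_(j in J) (pJ [set j] [:: M i j] < t j)%R%:R
       + ((rowJ M J i \in frequent_tuples J t) && (pJ J (rowJ M J i) < tau)%R)%:R :> R.
Proof.
have [/exists_inP[j Jj rare_j] | all_frequent] :=
  boolP [exists j in J, pJ [set j] [:: M i j] < t j]%R.
  rewrite (bigD1 j) //= rare_j -addrA.
  apply: le_trans (_ : _ <= 1) _; first by case: (_ < _)%R.
  by rewrite lerDl addr_ge0 ?sumr_ge0.
have -> : rowJ M J i \in frequent_tuples J t.
  apply: (map_mem_cart_prod (f := M i)) => j; rewrite mem_enum => Jj.
  rewrite mem_filter mem_Vcol andbT leNgt.
  by move: all_frequent; rewrite negb_exists_in => /forall_inP/(_ j Jj).
by rewrite lerDr sumr_ge0.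
Qed.

Lemma sum_rows_in_rare J (P : seq (seq T)) tau :
  uniq P -> 0 <= tau ->
  \sum_i ((rowJ M J i \in P) && (pJ J (rowJ M J i) < tau)%R)%:R
    <= (size P)%:R * tau * n%:R.
Proof.
move=> P_uniq tau_ge0.
under eq_bigr do rewrite -mulnb natrM.
rewrite (@sum_rowJ_in J P (fun v => (pJ J v < tau)%R%:R)) // mulrC ler_wpM2r //.
apply: le_trans (_ : _ <= \sum_(v <- P) tau) _.
  apply: ler_sum => v _.
  by case: (boolP (pJ J v < tau)) => [/ltW|_]; rewrite ?mulr1 ?mulr0.
by rewrite big_const_seq count_predT iter_addr_0 mulr_natl.
Qed.

End Exposure.

Theorem theorem2 (R : realFieldType) (T : eqType) (n d : nat) (M : 'M[T]_(n, d))
    (J : {set 'I_d}) (t : 'I_d -> R) (c : R) :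
  J != set0 ->
  (forall j, j \in J -> 0 < t j <= 1) ->
  0 < c < 1 ->
  QJ M J (c * \prod_(j in J) t j) <= \sum_(j in J) Qj M j (t j) + c.
Proof.
move=> _ t_range /andP[c_gt0 _].
have t_ge0 j : j \in J -> 0 <= t j by move=> /t_range /andP[/ltW].
set tau := c * _; set P := frequent_tuples M J t.
have P_uniq : uniq P.
  by apply: cart_prod_uniq => j; rewrite filter_uniq ?undup_uniq.
have tau_ge0 : 0 <= tau by apply: mulr_ge0; [exact: ltW | exact: prodr_ge0].
rewrite QJ_rows; under [X in _ <= X + _]eq_bigr do rewrite Qj_rows.
rewrite -mulr_sumr.
apply: le_trans (_ : _ <= n%:R^-1 * (\sum_(j in J) \sum_i
    (pJ R M [set j] [:: M i j] < t j)%R%:R + (size P)%:R * tau * n%:R)) _.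
  rewrite ler_wpM2l ?invr_ge0 // exchange_big /=.
  apply: le_trans (lerD (lexx _) (sum_rows_in_rare M J P_uniq tau_ge0)).
  by rewrite -big_split; apply: ler_sum => i _; apply: rare_row_cover.
rewrite mulrDr lerD2l.
have [n0|n_gt0] := posnP n; first by rewrite n0 invr0 mul0r ltW.
rewrite mulrC mulfK ?pnatr_eq0 -?lt0n // /tau mulrCA.
by apply: ler_piMr; [exact: ltW | exact: size_frequent_tuples_mulr_le1].
Qed.
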